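(* In the abstract boundary problem setting described in the context, let $A$ be a self-adjoint operator in $H_0$ with $T\subset A\subset T^*$ and $\mathcal D(A)=\operatorname{Ker}\gamma_0$. Then $\operatorname{Ker}\Gamma_0=\operatorname{Ker}\gamma_0$; in particular $\operatorname{Ker}\Gamma_0\subset H_1$.
   Context: Inner products are linear in the first argument and conjugate-linear in the second. Let $H_0$ be a separable Hilbert space with inner product $\langle\cdot,\cdot\rangle$, let $T$ be a closed densely defined symmetric operator in $H_0$ with adjoint $T^*$, and equip $\mathcal D(T^* )$ with the graph norm. Let $H_1\subset H_0$ be a dense subspace which is a Hilbert space in its own right with bounded inclusion $H_1\to H_0$. Let $K^\partial$ be a separable Hilbert space with inner product $\langle\cdot,\cdot\rangle_\partial$ and $K\subset K^\partial$ a dense subspace which is a Hilbert space in its own right with bounded inclusion. Let $K'$ be the space of continuous anti-linear functionals on $K$ (a Hilbert space with the dual norm); $K^\partial$ is regarded as a dense subspace of $K'$ via $y\mapsto(x\mapsto\langle y,x\rangle_\partial)$, so $K\subset K^\partial\subset K'$. For $y\in K'$, $x\in K$ put $\langle y,x\rangle_{K',K}=y(x)$ and $\langle x,y\rangle_{K,K'}=\overline{y(x)}$; these agree with $\langle\cdot,\cdot\rangle_\partial$ when $y\in K^\partial$. Standing assumptions: $H_1\subset\mathcal D(T^* )$ and $H_1$ is dense in $\mathcal D(T^* )$ in the graph norm; $T^*|_{H_1}:H_1\to H_0$ is bounded; $\gamma_0,\gamma_1:H_1\to K$ are bounded linear operators such that $\gamma=\gamma_0\oplus\gamma_1:H_1\to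 K\oplus K$ is surjective; $\operatorname{Ker}\gamma$ is dense in $H_0$ and $\mathcal D(T)=\operatorname{Ker}\gamma$; and the Lagrange identity $\langle T^*u,v\rangle-\langle u,T^*v\rangle=\langle\gamma_1u,\gamma_0v\rangle_\partial-\langle\gamma_0u,\gamma_1v\rangle_\partial$ holds for all $u,v\in H_1$. $\Gamma_0,\Gamma_1:\mathcal D(T^* )\to K'$ denote the (existing, unique) continuous extensions of $\gamma_0,\gamma_1$; they satisfy $\langle T^*u,v\rangle-\langle u,T^*v\rangle=\langle\Gamma_1u,\Gamma_0v\rangle_{K',K}-\langle\Gamma_0u,\Gamma_1v\rangle_{K',K}$ for $u\in\mathcal D(T^* )$, $v\in H_1$. *)

From HB Require Import structures.
From mathcomp Require Import all_boot all_order all_algebra.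
From mathcomp Require Import complex.
From mathcomp Require Import classical_sets reals.

Set Implicit Arguments.
Unset Strict Implicit.
Unset Printing Implicit Defensive.

Import Order.TTheory GRing.Theory Num.Theory.
Local Open Scope ring_scope.
Local Open Scope classical_set_scope.

Definition cplx (R : realType) := (R[i])%type.

Section Hilbert.
Variable (R : realType).
Local Notation C := (cplx R).

Definition is_inner_product (V : lmodType C) (ip : V -> V -> C) : Prop :=
  [/\ forall (a : C) (x y z : V), ip (a *: x + y) z = a * ip x z + ip y z,
      forall x y : V, ip y x = (ip x y)^*,
      forall x : V, 0 <= ip x x
    & forall x : V, ip x x = 0 -> x = 0].

(* The induced norm (a nonnegative real number, seen in C). *)
Definition hnorm (V : lmodType C) (ip : V -> V -> C) (x : V) : C := sqrtC (ip x x).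

Definition cauchy_seq (V : lmodType C) (ip : V -> V -> C) (u : nat -> V) : Prop :=
  forall e : C, 0 < e -> exists N : nat, forall m n : nat,
    (N <= m)%N -> (N <= n)%N -> hnorm ip (u m - u n) < e.

Definition converges_to (V : lmodType C) (ip : V -> V -> C) (u : nat -> V) (l : V) : Prop :=
  forall e : C, 0 < e -> exists N : nat, forall n : nat,
    (N <= n)%N -> hnorm ip (u n - l) < e.

Definition complete_ip (V : lmodType C) (ip : V -> V -> C) : Prop :=
  forall u : nat -> V, cauchy_seq ip u -> exists l : V, converges_to ip u l.

Definition dense_in (V : lmodType C) (ip : V -> V -> C) (S D : set V) : Prop :=
  forall x : V, D x -> forall e : C, 0 < e -> exists2 s : V, S s & hnorm ip (x - s) < e.

Definition separable_ip (V : lmodType C) (ip : V -> V -> C) : Prop :=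
  exists f : nat -> V, dense_in ip (range f) setT.

Definition hilbert_space (V : lmodType C) (ip : V -> V -> C) : Prop :=
  is_inner_product ip /\ complete_ip ip.

Definition linear_map (V W : lmodType C) (f : V -> W) : Prop :=
  forall (a : C) (x y : V), f (a *: x + y) = a *: f x + f y.

Definition bounded_map (V W : lmodType C) (ipV : V -> V -> C) (ipW : W -> W -> C)
    (f : V -> W) : Prop :=
  exists M : C, forall x : V, hnorm ipW (f x) <= M * hnorm ipV x.

Definition bounded_linear (V W : lmodType C) (ipV : V -> V -> C) (ipW : W -> W -> C)
    (f : V -> W) : Prop :=
  linear_map f /\ bounded_map ipV ipW f.

(* Continuous anti-linear functionals on (K, ipK): the elements of K'. *)
Definition antidual_elt (K : lmodType C) (ipK : K -> K -> C) (y : K -> C) : Prop :=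
  (forall (a : C) (x x' : K), y (a *: x + x') = a^* * y x + y x') /\
  exists M : C, forall x : K, `|y x| <= M * hnorm ipK x.

(* An operator in H is a pair (D, T) of a domain D : set H and T : H -> H,
   only the values of T on D being relevant. *)

Definition densely_defined (H : lmodType C) (ip : H -> H -> C) (D : set H) : Prop :=
  dense_in ip D setT.

Definition is_adjoint (H : lmodType C) (ip : H -> H -> C)
    (DT : set H) (T : H -> H) (DS : set H) (S : H -> H) : Prop :=
  DS = [set u | exists w : H, forall v, DT v -> ip (T v) u = ip v w] /\
  forall u w : H, DS u -> (forall v, DT v -> ip (T v) u = ip v w) -> S u = w.

Definition symmetric_op (H : lmodType C) (ip : H -> H -> C) (DT : set H) (T : H -> H) : Prop :=
  forall u v : H, DT u -> DT v -> ip (T u) v = ip u (T v).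

Definition closed_op (H : lmodType C) (ip : H -> H -> C) (DT : set H) (T : H -> H) : Prop :=
  forall (u : nat -> H) (x y : H), (forall n, DT (u n)) ->
    converges_to ip u x -> converges_to ip (fun n => T (u n)) y -> DT x /\ T x = y.

Definition self_adjoint (H : lmodType C) (ip : H -> H -> C) (DA : set H) (A : H -> H) : Prop :=
  densely_defined ip DA /\ is_adjoint ip DA A DA A.

Definition op_ext (H : lmodType C) (D1 : set H) (T1 : H -> H) (D2 : set H) (T2 : H -> H) : Prop :=
  D1 `<=` D2 /\ forall u, D1 u -> T2 u = T1 u.

Definition graph_norm (H : lmodType C) (ip : H -> H -> C) (T : H -> H) (u : H) : C :=
  sqrtC (ip u u + ip (T u) (T u)).

End Hilbert.

From HB Require Import structures.
From mathcomp Require Import all_boot all_order all_algebra.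
From mathcomp Require Import complex.
From mathcomp Require Import classical_sets reals.
Set Implicit Arguments.
Unset Strict Implicit.
Unset Printing Implicit Defensive.

Import Order.TTheory GRing.Theory Num.Theory.
Local Open Scope ring_scope.
Local Open Scope classical_set_scope.

(* Ker gamma_0 is contained in Ker Gamma_0 because
   Gamma_0 extends gamma_0 and gamma_0 h = 0 gives the zero functional.
   Conversely let u in D(T^* ) with Gamma_0 u = 0.  For every v in
   D(A) = Ker gamma_0 the extended Lagrange identity gives
     <T^* u, v> - <u, T^* v> = Gamma_1 u (gamma_0 v) - Gamma_0 u (gamma_1 v) = 0,
   and T^* v = A v since A is a restriction of T^*.  Hence <A v, u> = <v, T^* u>
   for all v in D(A), i.e. u lies in the domain of A^* = A, which is Ker gamma_0. *)

Section InnerProductFacts.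
Variables (R : realType) (V : lmodType (cplx R)) (ip : V -> V -> cplx R).
Hypothesis ip_inner : is_inner_product ip.

Lemma ip0l (z : V) : ip 0 z = 0.
Proof.
case: ip_inner => ipD _ _ _.
have := ipD 1 0 0 z; rewrite scale1r addr0 mul1r => E.
by apply: (addrI (ip 0 z)); rewrite addr0 -E.
Qed.

Lemma ip_conj_eq (u v w z : V) : ip w v = ip u z -> ip z u = ip v w.
Proof.
case: ip_inner => _ ip_sym _ _ E.
by rewrite ip_sym -E -ip_sym.
Qed.

End InnerProductFacts.

Lemma linear_map0 (R : realType) (V W : lmodType (cplx R)) (f : V -> W) :
  linear_map f -> f 0 = 0.
Proof.
move=> flin; have := flin 1 0 0; rewrite !scale1r addr0 => E.
by apply: (addrI (f 0)); rewrite addr0 -E.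
Qed.

Lemma antidual0 (R : realType) (K : lmodType (cplx R)) (ipK : K -> K -> cplx R)
    (y : K -> cplx R) :
  antidual_elt ipK y -> y 0 = 0.
Proof.
case=> ylin _; have := ylin 1 0 0; rewrite scale1r addr0 conjC1 mul1r => E.
by apply: (addrI (y 0)); rewrite addr0 -E.
Qed.

Lemma adjoint_dom (R : realType) (H : lmodType (cplx R)) (ip : H -> H -> cplx R)
    (DT : set H) (T : H -> H) (DS : set H) (S : H -> H) (u w : H) :
  is_adjoint ip DT T DS S -> (forall v, DT v -> ip (T v) u = ip v w) -> DS u.
Proof. by case=> -> _ Hw; exists w. Qed.

Section KernelOfGamma0.
Variables (R : realType) (H0 : lmodType (cplx R)) (ip0 : H0 -> H0 -> cplx R).
Variables (DTs : set H0) (Ts : H0 -> H0).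
Variables (H1 : lmodType (cplx R)) (iota : H1 -> H0).
Variables (K : lmodType (cplx R)) (ipK : K -> K -> cplx R).
Variables (gamma0 gamma1 : H1 -> K) (Gamma0 Gamma1 : H0 -> (K -> cplx R)).
Variables (DA : set H0) (A : H0 -> H0).

Hypothesis ip0_inner : is_inner_product ip0.
Hypothesis Gamma1_antidual : forall u, DTs u -> antidual_elt ipK (Gamma1 u).
Hypothesis lagrange : forall u (v : H1), DTs u ->
  ip0 (Ts u) (iota v) - ip0 u (Ts (iota v)) = Gamma1 u (gamma0 v) - Gamma0 u (gamma1 v).
Hypothesis A_selfadjoint : is_adjoint ip0 DA A DA A.
Hypothesis A_sub_Ts : op_ext DA A DTs Ts.
Hypothesis DA_ker : DA = iota @` [set h | gamma0 h = 0].

(* Ker Gamma_0 is contained in D(A): such u is symmetric against D(A),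
   hence belongs to D(A^* ) = D(A). *)
Lemma kerGamma0_sub_domA (u : H0) :
  DTs u -> (forall x : K, Gamma0 u x = 0) -> DA u.
Proof.
move=> Du G0u; apply: (adjoint_dom (w := Ts u) A_selfadjoint) => v Dv.
move: (Dv); rewrite DA_ker => -[h /= h0 hv]; subst v.
have G1u0 : Gamma1 u 0 = 0 by exact: antidual0 (Gamma1_antidual Du).
have sym_uh : ip0 (Ts u) (iota h) = ip0 u (Ts (iota h)).
  by apply/eqP; rewrite -subr_eq0 lagrange // h0 G1u0 G0u subrr.
case: A_sub_Ts => _ Ts_ext.
rewrite (Ts_ext _ Dv) in sym_uh.
exact (@ip_conj_eq R H0 ip0 ip0_inner u (iota h) (Ts u) (A (iota h)) sym_uh).
Qed.

End KernelOfGamma0.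

Lemma kergamma0_sub_kerGamma0 (R : realType) (H0 H1 K Kd : lmodType (cplx R))
    (ipd : Kd -> Kd -> cplx R) (j : K -> Kd) (DTs : set H0) (iota : H1 -> H0)
    (gamma0 : H1 -> K) (Gamma0 : H0 -> (K -> cplx R)) (h : H1) :
  is_inner_product ipd -> linear_map j -> (forall h : H1, DTs (iota h)) ->
  (forall h : H1, Gamma0 (iota h) = (fun x => ipd (j (gamma0 h)) (j x))) ->
  gamma0 h = 0 -> DTs (iota h) /\ forall x : K, Gamma0 (iota h) x = 0.
Proof.
move=> ipd_inner jlin H1_sub G0ext h0; split=> // x.
by rewrite G0ext h0 (linear_map0 jlin) (ip0l ipd_inner).
Qed.

Theorem lemma4p4 (R : realType)
  (* the Hilbert space H_0 and the operators T, T^* *)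
  (H0 : lmodType (cplx R)) (ip0 : H0 -> H0 -> cplx R)
  (DT : set H0) (T : H0 -> H0) (DTs : set H0) (Ts : H0 -> H0)
  (* the Hilbert space H_1 with its inclusion iota : H_1 -> H_0 *)
  (H1 : lmodType (cplx R)) (ip1 : H1 -> H1 -> cplx R) (iota : H1 -> H0)
  (* the boundary spaces K ⊂ K^∂ (inclusion j); K' is realised as the
     anti-linear bounded functionals K -> C *)
  (K : lmodType (cplx R)) (ipK : K -> K -> cplx R)
  (Kd : lmodType (cplx R)) (ipd : Kd -> Kd -> cplx R) (j : K -> Kd)
  (* the trace maps and their extensions *)
  (gamma0 gamma1 : H1 -> K) (Gamma0 Gamma1 : H0 -> (K -> cplx R))
  (* the self-adjoint operator A *)
  (DA : set H0) (A : H0 -> H0) :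
  (* H_0 separable Hilbert space *)
  hilbert_space ip0 -> separable_ip ip0 ->
  (* T closed, densely defined, symmetric; T^* its adjoint *)
  closed_op ip0 DT T -> densely_defined ip0 DT -> symmetric_op ip0 DT T ->
  is_adjoint ip0 DT T DTs Ts ->
  (* H_1: Hilbert space, dense in H_0 with bounded (injective) inclusion *)
  hilbert_space ip1 -> bounded_linear ip1 ip0 iota -> injective iota ->
  dense_in ip0 (range iota) setT ->
  (* K^∂ separable Hilbert; K ⊂ K^∂ dense Hilbert subspace, bounded inclusion *)
  hilbert_space ipd -> separable_ip ipd ->
  hilbert_space ipK -> bounded_linear ipK ipd j -> injective j ->
  dense_in ipd (range j) setT ->
  (* H_1 ⊂ D(T^* ), dense in D(T^* ) for the graph norm *)
  (forall h : H1, DTs (iota h)) ->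
  (forall u, DTs u -> forall e : cplx R, 0 < e ->
     exists h : H1, graph_norm ip0 Ts (u - iota h) < e) ->
  (* T^*|_{H_1} : H_1 -> H_0 bounded *)
  bounded_map ip1 ip0 (fun h => Ts (iota h)) ->
  (* gamma_0, gamma_1 bounded linear, gamma = gamma_0 ⊕ gamma_1 surjective *)
  bounded_linear ip1 ipK gamma0 -> bounded_linear ip1 ipK gamma1 ->
  (forall a b : K, exists h : H1, gamma0 h = a /\ gamma1 h = b) ->
  (* Ker gamma dense in H_0 and D(T) = Ker gamma *)
  dense_in ip0 (iota @` [set h | gamma0 h = 0 /\ gamma1 h = 0]) setT ->
  DT = iota @` [set h | gamma0 h = 0 /\ gamma1 h = 0] ->
  (* Lagrange identity on H_1 *)
  (forall u v : H1,
     ip0 (Ts (iota u)) (iota v) - ip0 (iota u) (Ts (iota v))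
     = ipd (j (gamma1 u)) (j (gamma0 v)) - ipd (j (gamma0 u)) (j (gamma1 v))) ->
  (* Gamma_0, Gamma_1 : D(T^* ) -> K' continuous (graph norm) linear extensions
     of gamma_0, gamma_1 *)
  (forall u, DTs u -> antidual_elt ipK (Gamma0 u)) ->
  (forall u, DTs u -> antidual_elt ipK (Gamma1 u)) ->
  (forall (a : cplx R) u v, DTs u -> DTs v ->
     Gamma0 (a *: u + v) = (fun x => a * Gamma0 u x + Gamma0 v x)) ->
  (forall (a : cplx R) u v, DTs u -> DTs v ->
     Gamma1 (a *: u + v) = (fun x => a * Gamma1 u x + Gamma1 v x)) ->
  (exists M : cplx R, forall u, DTs u -> forall x : K,
     `|Gamma0 u x| <= M * graph_norm ip0 Ts u * hnorm ipK x) ->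
  (exists M : cplx R, forall u, DTs u -> forall x : K,
     `|Gamma1 u x| <= M * graph_norm ip0 Ts u * hnorm ipK x) ->
  (forall h : H1, Gamma0 (iota h) = (fun x => ipd (j (gamma0 h)) (j x))) ->
  (forall h : H1, Gamma1 (iota h) = (fun x => ipd (j (gamma1 h)) (j x))) ->
  (* extended Lagrange identity *)
  (forall u (v : H1), DTs u ->
     ip0 (Ts u) (iota v) - ip0 u (Ts (iota v))
     = Gamma1 u (gamma0 v) - Gamma0 u (gamma1 v)) ->
  (* A self-adjoint, T ⊂ A ⊂ T^*, D(A) = Ker gamma_0 *)
  self_adjoint ip0 DA A -> op_ext DT T DA A -> op_ext DA A DTs Ts ->
  DA = iota @` [set h | gamma0 h = 0] ->
  (* conclusion: Ker Gamma_0 = Ker gamma_0, in particular Ker Gamma_0 ⊂ H_1 *)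
  [set u | DTs u /\ forall x : K, Gamma0 u x = 0] = iota @` [set h | gamma0 h = 0] /\
  [set u | DTs u /\ forall x : K, Gamma0 u x = 0] `<=` range iota.
Proof.
move=> [ip0_inner _] _ _ _ _ _ _ _ _ _ [ipd_inner _] _ _ [jlin _] _ _ H1_sub
  _ _ _ _ _ _ _ _ _ G1_antidual _ _ _ _ G0_ext _ lagrange [_ A_adj] _ A_sub_Ts DA_ker.
have kerG0 : [set u | DTs u /\ forall x : K, Gamma0 u x = 0] =
             iota @` [set h | gamma0 h = 0].
  apply/seteqP; split => u.
  - move=> [Du G0u]; rewrite -DA_ker.
    exact: (kerGamma0_sub_domA ip0_inner G1_antidual lagrange A_adj A_sub_Ts DA_ker).
  - by move=> [h /= h0 <-]; exact: (kergamma0_sub_kerGamma0 ipd_inner jlin H1_sub G0_ext).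
split=> //; rewrite kerG0 => _ [h _ <-]; by exists h.
Qed.
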